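(* Let $u\in V$ satisfy $\operatorname{dist}(u,\mathcal M)\le\varepsilon_{model}$. Let $w=P_Wu+\eta$ with $\eta\in W$ and $\|\eta\|\le\varepsilon_{noise}$. Let $(u^*,y^* )\in(w+W^\perp)\times Y$ be a global minimizer of $(v,y)\mapsto\mathcal R(v,y)$ over $(w+W^\perp)\times Y$. Then, with $\varepsilon:=\kappa(\varepsilon_{model}+\varepsilon_{noise})$ and $\kappa=R/r$, $$\|u^*-u(y^* )\|\le\varepsilon\qquad\text{and}\qquad\|u-u^*\|\le\varepsilon_{noise}+\delta_\varepsilon\le2\delta_\varepsilon.$$ In particular, if $u\in\mathcal M$ and $\eta=0$, then $\|u-u^*\|\le\delta_0$.
   Context: Let $V$ and $Z$ be real Hilbert spaces, with $\|\cdot\|$ the norm of $V$ and $Z'$ the dual of $Z$. Let $Y\subset\mathbb R^d$ be compact. For $y\in Y$ let $A(y):V\to Z'$ be a bounded linear isomorphism and $f(y)\in Z'$, with $y\mapsto A(y)$ and $y\mapsto f(y)$ continuous. Assume there are constants $0<r\le R$ such that $\|A(y)\|_{V\to Z'}\le R$ and $\|A(y)^{-1}\|_{Z'\to V}\le r^{-1}$ for all $y\in Y$. Let $u(y)=A(y)^{-1}f(y)$ and $\mathcal M=\{u(y):y\in Y\}$. Define the residual $\mathcal R(v,y)=\|A(y)v-f(y)\|_{Z'}$. Let $W\subset V$ be a subspace of finite dimension $m$, let $P_W$ be the orthogonal projection onto $W$, and let $W^\perp$ be its orthogonal complement. Assume $W^\perp\ne\{0\}$. For $\sigma\ge0$ define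 $\mathcal M_\sigma=\{v:\operatorname{dist}(v,\mathcal M)\le\sigma\}$ and $\delta_\sigma=\sup\{\|u-v\|:u,v\in\mathcal M_\sigma,u-v\in W^\perp\}$. *)

From mathcomp Require Import all_boot all_order all_algebra.
From mathcomp Require Import all_classical all_reals all_analysis.
Set Implicit Arguments. Unset Strict Implicit. Unset Printing Implicit Defensive.
Import Order.TTheory GRing.Theory Num.Theory.
Import numFieldNormedType.Exports.
Local Open Scope classical_set_scope.
Local Open Scope ring_scope.

Section Defs.
Context {R : realType}.

Definition inner_product_of_norm (V : normedModType R) (ip : V -> V -> R) : Prop :=
  (forall x y, ip x y = ip y x) /\
  (forall (a : R) x y z, ip (a *: x + y) z = a * ip x z + ip y z) /\
  (forall x, `|x| = Num.sqrt (ip x x)).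

Definition finite_dim_subspace (V : lmodType R) (W : set V) (m : nat) : Prop :=
  exists b : 'I_m -> V,
    (forall c : 'I_m -> R, \sum_(i < m) c i *: b i = 0 -> forall i, c i = 0) /\
    (forall v, W v <-> exists c : 'I_m -> R, v = \sum_(i < m) c i *: b i).

Definition orth_compl (V : lmodType R) (ip : V -> V -> R) (W : set V) : set V :=
  [set v | forall x, W x -> ip v x = 0].

Definition is_orth_proj (V : lmodType R) (ip : V -> V -> R) (W : set V) (P : V -> V) :=
  forall v, W (P v) /\ orth_compl ip W (v - P v).

(* elements of the dual Z' : bounded linear functionals on Z *)
Definition bounded_functional (Z : normedModType R) (phi : Z -> R) : Prop :=
  (forall (a : R) x y, phi (a *: x + y) = a * phi x + phi y) /\
  (exists C : R, forall z, `|phi z| <= C * `|z|).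

Definition dual_norm (Z : normedModType R) (phi : Z -> R) : R :=
  sup [set `|phi z| | z in [set z : Z | `|z| <= 1]].

Definition residual (V : normedModType R) (Z : normedModType R) (d : nat)
  (A : 'rV[R]_d -> V -> Z -> R) (f : 'rV[R]_d -> Z -> R) (v : V) (y : 'rV[R]_d) : R :=
  dual_norm (fun z => A y v z - f y z).

(* dist(v, S), in the extended reals (S may be empty) *)
Definition dist_set (V : normedModType R) (S : set V) (v : V) : \bar R :=
  ereal_inf [set (`|v - x|)%:E | x in S].

Definition fattening (V : normedModType R) (M : set V) (sigma : R) : set V :=
  [set v | (dist_set M v <= sigma%:E)%E].

Definition delta_width (V : normedModType R) (ip : V -> V -> R) (W : set V)
  (M : set V) (sigma : R) : \bar R :=
  ereal_sup [set x | exists a b, fattening M sigma a /\ fattening M sigma b /\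
                       orth_compl ip W (a - b) /\ x = (`|a - b|)%:E].

End Defs.

From mathcomp Require Import all_boot all_order all_algebra.
From mathcomp Require Import all_classical all_reals all_analysis.
From mathcomp Require Import lra.
Import Order.TTheory GRing.Theory Num.Theory.
Import numFieldNormedType.Exports.
Local Open Scope classical_set_scope.
Local Open Scope ring_scope.

(* Write M for the solution manifold.  For any
   x = u(y) in M the vector v := x + (w - P x) lies in w + W^perp, and since
   v - x = P(u - x) + eta we get ||v - x|| <= ||u - x|| + eps_noise.  Hence
     r ||ustar - u(ystar)|| <= R(ustar, ystar) <= R(v, y) <= R ||v - x||
                      <= R (||u - x|| + eps_noise),
   and taking the infimum over x gives ||ustar - u(ystar)|| <= eps.  Consequently
   both u + eta and ustar lie in the fattened manifold M_eps, and their
   difference lies in W^perp, so ||u - ustar|| <= ||eta|| + delta_eps.  Finally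
   eps_noise <= eps <= delta_eps because W^perp contains a line. *)

Section InnerProduct.
Context {R : realType} {V : normedModType R} {ip : V -> V -> R}.
Hypothesis ip_norm : inner_product_of_norm ip.

Lemma ipDl x y z : ip (x + y) z = ip x z + ip y z.
Proof. by case: ip_norm => _ [lin _]; rewrite -[x in LHS]scale1r lin mul1r. Qed.

Lemma ip0l z : ip 0 z = 0.
Proof. by have := ipDl 0 0 z; rewrite addr0; lra. Qed.

Lemma ipZl a x z : ip (a *: x) z = a * ip x z.
Proof. by case: ip_norm => _ [lin _]; rewrite -[a *: x]addr0 lin ip0l addr0. Qed.

Lemma ipBl x y z : ip (x - y) z = ip x z - ip y z.
Proof. by rewrite ipDl -scaleN1r ipZl mulN1r. Qed.

Lemma ipC x y : ip x y = ip y x.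
Proof. by case: ip_norm. Qed.

Lemma sqr_norm_ip x : `|x| ^+ 2 = ip x x.
Proof.
case: ip_norm => _ [_ normE]; rewrite normE.
have [ge0|lt0] := leP 0 (ip x x); first by rewrite sqr_sqrtr.
have /normr0_eq0 x0 : `|x| = 0 by rewrite normE ltr0_sqrtr.
by move: lt0; rewrite x0 ip0l ltxx.
Qed.

Lemma pythagoras a b : ip a b = 0 -> `|a + b| ^+ 2 = `|a| ^+ 2 + `|b| ^+ 2.
Proof.
move=> ab0; rewrite !sqr_norm_ip ipDl (ipC a) (ipC b) !ipDl (ipC b a) ab0; lra.
Qed.

Lemma orth_complZ (W : set V) a v : orth_compl ip W v -> orth_compl ip W (a *: v).
Proof. by move=> ov x Wx; rewrite ipZl ov // mulr0. Qed.

Lemma orth_complB (W : set V) v1 v2 :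
  orth_compl ip W v1 -> orth_compl ip W v2 -> orth_compl ip W (v1 - v2).
Proof. by move=> o1 o2 x Wx; rewrite ipBl o1 // o2 // subr0. Qed.

End InnerProduct.

Section Projection.
Context {R : realType} {V : normedModType R} {ip : V -> V -> R}.
Context {W : set V} {m : nat} {P : V -> V}.
Hypothesis ip_norm : inner_product_of_norm ip.
Hypotheses (W_fin : finite_dim_subspace W m) (P_proj : is_orth_proj ip W P).

Lemma subspaceD x y : W x -> W y -> W (x + y).
Proof.
case: W_fin => b [_ spanW] /spanW [c ->] /spanW [c' ->]; apply/spanW.
exists (fun i => c i + c' i); rewrite -big_split; apply: eq_bigr => i _.
by rewrite scalerDl.
Qed.

Lemma subspaceB x y : W x -> W y -> W (x - y).
Proof.
case: W_fin => b [_ spanW] Wx /spanW [c ->]; apply: subspaceD => //; apply/spanW.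
exists (fun i => - c i); rewrite -sumrN; apply: eq_bigr => i _.
by rewrite scaleNr.
Qed.

Lemma orth_proj_unique v q : W q -> orth_compl ip W (v - q) -> P v = q.
Proof.
move=> Wq oq; have [WPv oPv] := P_proj v.
have Wdiff : W (P v - q) by apply: subspaceB.
have : ip (P v - q) (P v - q) = 0.
  have diffE : P v - q = (v - q) - (v - P v).
    by rewrite opprB [RHS]addrC addrA subrK.
  by rewrite {1}diffE (ipBl ip_norm) oq // oPv // subrr.
rewrite -(sqr_norm_ip ip_norm) => /eqP; rewrite expf_eq0 /= normr_eq0 subr_eq0.
by move/eqP.
Qed.

Lemma orth_projB u x : P (u - x) = P u - P x.
Proof.
apply: orth_proj_unique; first by apply: subspaceB; [case: (P_proj u)|case: (P_proj x)].
have -> : u - x - (P u - P x) = (u - P u) - (x - P x).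
  by rewrite !opprB addrACA [RHS]addrACA [- P u + _]addrC.
by apply: (orth_complB ip_norm); [exact: (P_proj u).2 | exact: (P_proj x).2].
Qed.

Lemma orth_proj_contract z : `|P z| <= `|z|.
Proof.
have : `|P z + (z - P z)| ^+ 2 = `|P z| ^+ 2 + `|z - P z| ^+ 2.
  apply: (pythagoras ip_norm); rewrite (ipC ip_norm).
  by apply: (P_proj z).2; exact: (P_proj z).1.
rewrite addrC subrK.
have := normr_ge0 (P z); have := normr_ge0 z; have := normr_ge0 (z - P z).
nra.
Qed.

Lemma orth_compl_same_component u eta v :
  orth_compl ip W (v - (P u + eta)) -> orth_compl ip W (u + eta - v).
Proof.
move=> ov; have -> : u + eta - v = (u - P u) - (v - (P u + eta)).
  by rewrite opprB !addrA subrK.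
by apply: (orth_complB ip_norm) => //; exact: (P_proj u).2.
Qed.

End Projection.

Section DistanceToSet.
Context {R : realType} {V : normedModType R} {S : set V}.

Lemma dist_set_ge0 v : (0%:E <= dist_set S v)%E.
Proof. by apply/ereal_infP => _ [x _ <-]; rewrite lee_fin. Qed.

Lemma dist_set_le v x : S x -> (dist_set S v <= (`|v - x|)%:E)%E.
Proof. by move=> Sx; apply: ereal_inf_lbound; exists x. Qed.

Lemma dist_set_approx {v e t} : (dist_set S v <= e%:E)%E -> 0 < t ->
  exists2 x, S x & `|v - x| < e + t.
Proof.
move=> dve t0; have : (dist_set S v < (e + t)%:E)%E.
  by apply: le_lt_trans dve _; rewrite lte_fin ltrDl.
by case/ereal_inf_lt => _ [x Sx <-]; rewrite lte_fin; exists x.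
Qed.

Lemma le_through_dist_set {v} {a c b e : R} : 0 < c ->
  (dist_set S v <= e%:E)%E -> (forall x, S x -> a <= c * (`|v - x| + b)) ->
  a <= c * (e + b).
Proof.
move=> c0 dve bound; apply/ler_addgt0Pr => t t0.
have [x Sx vx] := dist_set_approx dve (divr_gt0 t0 c0).
have := bound x Sx; have : c * `|v - x| <= c * (e + t / c) by rewrite ler_pM2l // ltW.
rewrite mulrDr [c * (t / c)]mulrC divfK ?gt_eqF //; lra.
Qed.

Lemma fattening_near {sigma x v} : S x -> `|v - x| <= sigma -> fattening S sigma v.
Proof.
move=> Sx vx; change (dist_set S v <= sigma%:E)%E.
by apply: le_trans (dist_set_le v x Sx) _; rewrite lee_fin.
Qed.

Lemma fattening_mem {sigma x} : 0 <= sigma -> S x -> fattening S sigma x.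
Proof. by move=> sigma0 Sx; apply: (fattening_near Sx); rewrite subrr normr0. Qed.

(* The distance to S is 1-Lipschitz, in the form needed for fattenings. *)
Lemma fattening_shift {e sigma v h} : (dist_set S v <= e%:E)%E -> e + `|h| <= sigma ->
  fattening S sigma (v + h).
Proof.
move=> dve esigma; change (dist_set S (v + h)%R <= sigma%:E)%E.
apply/lee_addgt0Pr => t t0.
have [x Sx vx] := dist_set_approx dve t0.
apply: le_trans (dist_set_le _ _ Sx) _; rewrite -EFinD lee_fin.
have : `|v + h - x| <= `|v - x| + `|h| by rewrite addrAC; apply: ler_normD.
lra.
Qed.

End DistanceToSet.

Section Width.
Context {R : realType} {V : normedModType R} {ip : V -> V -> R} {W M : set V}.
Hypothesis ip_norm : inner_product_of_norm ip.

Lemma delta_width_ge sigma a b : fattening M sigma a -> fattening M sigma b ->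
  orth_compl ip W (a - b) -> ((`|a - b|)%:E <= delta_width ip W M sigma)%E.
Proof. by move=> Ma Mb oab; apply: ereal_sup_ubound; exists a, b. Qed.

(* If M is nonempty and W^perp is nontrivial then delta_sigma >= sigma: move a
   point of M by sigma along a direction of W^perp. *)
Lemma delta_width_ge_radius {sigma x e} : 0 <= sigma -> M x ->
  orth_compl ip W e -> e != 0 -> (sigma%:E <= delta_width ip W M sigma)%E.
Proof.
move=> sigma0 Mx oe e0; have ne0 : 0 < `|e| by rewrite normr_gt0.
pose s := sigma / `|e|.
have lenE : `|s *: e| = sigma by rewrite normrZ ger0_norm ?divr_ge0 // mulfVK // gt_eqF.
have -> : sigma%:E = (`|x + s *: e - x|)%:E by rewrite addrC addKr lenE.
apply: delta_width_ge.
- by apply: (fattening_near Mx); rewrite addrC addKr lenE.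
- exact: fattening_mem.
- by rewrite addrC addKr; apply: (orth_complZ ip_norm).
Qed.

Lemma delta_width_ge_perturbed sigma a b h t : fattening M sigma a ->
  fattening M sigma b -> orth_compl ip W (a - b) -> `|h| <= t ->
  ((`|a + h - b|)%:E <= t%:E + delta_width ip W M sigma)%E.
Proof.
move=> Ma Mb oab ht; apply: le_trans (_ : _ <= (t + `|a - b|)%:E)%E _.
  rewrite lee_fin addrAC; apply: le_trans (ler_normD _ _) _; lra.
by rewrite EFinD leeD2l //; apply: delta_width_ge.
Qed.

End Width.

Lemma add_le_double {R : realType} (x : R) (d : \bar R) :
  (x%:E <= d)%E -> (x%:E + d <= 2%:E * d)%E.
Proof.
case: d => [d | | ] //=.
- by rewrite !lee_fin => xd; lra.
- by move=> _; rewrite addey // gt0_muley // lte_fin.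
Qed.

Lemma le_condition_mul {R : realFieldType} (r Rc s : R) :
  0 < r -> r <= Rc -> 0 <= s -> s <= Rc / r * s.
Proof. by move=> r_gt0 r_le_Rc s_ge0; rewrite ler_peMl // ler_pdivlMr // mul1r. Qed.

Section Residual.
Context {R : realType} {V Z : normedModType R} {d : nat}.
Context {Y : set 'rV[R]_d} {A : 'rV[R]_d -> V -> Z -> R} {f : 'rV[R]_d -> Z -> R}.
Context {usol : 'rV[R]_d -> V} {r Rc : R}.
Hypothesis A_linear : forall y, Y y -> forall (a : R) v1 v2 z,
  A y (a *: v1 + v2) z = a * A y v1 z + A y v2 z.
Hypothesis A_bounded : forall y, Y y -> forall v, bounded_functional (A y v).
Hypothesis A_norm : forall y, Y y -> forall v, dual_norm (A y v) <= Rc * `|v|.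
Hypothesis A_inv_norm : forall y, Y y -> forall phi v, bounded_functional phi ->
  A y v = phi -> `|v| <= r^-1 * dual_norm phi.
Hypothesis usol_solves : forall y, Y y -> A y (usol y) = f y.

Lemma residual_error y v : Y y -> residual A f v y = dual_norm (A y (v - usol y)).
Proof.
move=> Yy; rewrite /residual; congr dual_norm; apply: funext => z.
have -> : v - usol y = (-1) *: usol y + v by rewrite scaleN1r addrC.
by rewrite A_linear // usol_solves // mulN1r addrC.
Qed.

Lemma error_le_residual y v : Y y -> `|v - usol y| <= r^-1 * residual A f v y.
Proof.
move=> Yy; rewrite residual_error //.
exact: (A_inv_norm _ Yy _ _ (A_bounded _ Yy (v - usol y)) erefl).
Qed.

Lemma residual_le_error y v : Y y -> residual A f v y <= Rc * `|v - usol y|.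
Proof. by move=> Yy; rewrite residual_error //; apply: A_norm. Qed.

Hypotheses (r_gt0 : 0 < r) (r_le_Rc : r <= Rc).

Context {ip : V -> V -> R} {W : set V} {m : nat} {P : V -> V}.
Hypotheses (ip_norm : inner_product_of_norm ip) (W_fin : finite_dim_subspace W m)
  (P_proj : is_orth_proj ip W P).
Context {u eta w ustar : V} {ystar : 'rV[R]_d}.
Hypotheses (w_def : w = P u + eta) (Y_ystar : Y ystar).
Hypothesis ustar_min : forall v y, orth_compl ip W (v - w) -> Y y ->
  residual A f ustar ystar <= residual A f v y.

(* Comparing the minimizer with the admissible candidate x + (w - P x) built
   from a point x = u(y) of the manifold. *)
Lemma minimizer_error_le_point y : Y y ->
  `|ustar - usol ystar| <= Rc / r * (`|u - usol y| + `|eta|).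
Proof.
move=> Yy; set x := usol y; pose v := x + (w - P x).
have v_admissible : orth_compl ip W (v - w).
  have -> : v - w = x - P x by rewrite /v addrCA [w + _]addrC addrK.
  exact: (P_proj x).2.
have v_close : `|v - x| <= `|u - x| + `|eta|.
  have -> : v - x = P (u - x) + eta.
    by rewrite /v addrC addKr w_def (orth_projB ip_norm W_fin P_proj) addrAC.
  apply: le_trans (ler_normD _ _) _; rewrite lerD2r.
  exact: (orth_proj_contract ip_norm P_proj).
apply: le_trans (error_le_residual ystar ustar Y_ystar) _.
rewrite [Rc / r]mulrC -mulrA ler_wpM2l ?invr_ge0 ?(ltW r_gt0) //.
apply: le_trans (ustar_min _ _ v_admissible Yy) _.
apply: le_trans (residual_le_error y v Yy) _.
by rewrite ler_wpM2l // ltW // (lt_le_trans r_gt0 r_le_Rc).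
Qed.

Lemma minimizer_error eps_model eps_noise :
  (dist_set (usol @` Y) u <= eps_model%:E)%E -> `|eta| <= eps_noise ->
  `|ustar - usol ystar| <= Rc / r * (eps_model + eps_noise).
Proof.
move=> dist_u eta_le; have kappa_gt0 : 0 < Rc / r.
  by rewrite divr_gt0 // (lt_le_trans r_gt0 r_le_Rc).
apply: le_trans (_ : _ <= Rc / r * (eps_model + `|eta|)) _.
  apply: (le_through_dist_set kappa_gt0 dist_u) => _ [y Yy <-].
  exact: minimizer_error_le_point.
by rewrite ler_wpM2l ?(ltW kappa_gt0) // lerD2l.
Qed.

Lemma minimizer_exact : (usol @` Y) u -> eta = 0 -> ustar = usol ystar.
Proof.
move=> M_u eta0; apply/eqP; rewrite -subr_eq0 -normr_eq0 eq_le normr_ge0 andbT.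
have eta_le0 : `|eta| <= 0 by rewrite eta0 normr0.
have := minimizer_error 0 0 (fattening_mem (lexx (0 : R)) M_u) eta_le0.
by rewrite addr0 mulr0.
Qed.

End Residual.
Theorem mainTheorem8 (R : realType)
  (V : completeNormedModType R) (ipV : V -> V -> R)
  (Z : completeNormedModType R) (ipZ : Z -> Z -> R)
  (d : nat) (Y : set 'rV[R]_d)
  (A : 'rV[R]_d -> V -> Z -> R) (f : 'rV[R]_d -> Z -> R)
  (usol : 'rV[R]_d -> V) (r Rc : R)
  (W : set V) (m : nat) (P : V -> V) :
  inner_product_of_norm ipV ->
  inner_product_of_norm ipZ ->
  compact Y ->
  (* A(y) : V -> Z' is a bounded linear isomorphism *)
  (forall y, Y y -> forall (a : R) v1 v2 z,
      A y (a *: v1 + v2) z = a * A y v1 z + A y v2 z) ->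
  (forall y, Y y -> forall v, bounded_functional (A y v)) ->
  (forall y, Y y -> forall v1 v2, A y v1 = A y v2 -> v1 = v2) ->
  (forall y, Y y -> forall phi, bounded_functional phi -> exists v, A y v = phi) ->
  (forall y, Y y -> bounded_functional (f y)) ->
  (* continuity of y |-> A(y) (operator norm) and y |-> f(y) on Y *)
  (forall y, Y y -> forall e : R, 0 < e -> exists2 del : R, 0 < del &
      forall y', Y y' -> `|y - y'| < del ->
        (forall v, dual_norm (fun z => A y' v z - A y v z) <= e * `|v|) /\
        dual_norm (fun z => f y' z - f y z) <= e) ->
  0 < r -> r <= Rc ->
  (* ||A(y)|| <= R and ||A(y)^{-1}|| <= r^{-1} *)
  (forall y, Y y -> forall v, dual_norm (A y v) <= Rc * `|v|) ->
  (forall y, Y y -> forall phi v, bounded_functional phi -> A y v = phi ->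
      `|v| <= r^-1 * dual_norm phi) ->
  (* u(y) = A(y)^{-1} f(y) *)
  (forall y, Y y -> A y (usol y) = f y) ->
  finite_dim_subspace W m ->
  is_orth_proj ipV W P ->
  (exists v, orth_compl ipV W v /\ v <> 0) ->
  let M := usol @` Y in
  forall (u : V) (eps_model eps_noise : R) (eta w ustar : V) (ystar : 'rV[R]_d),
  (dist_set M u <= eps_model%:E)%E ->
  W eta -> `|eta| <= eps_noise ->
  w = P u + eta ->
  orth_compl ipV W (ustar - w) -> Y ystar ->
  (forall v y, orth_compl ipV W (v - w) -> Y y ->
      residual A f ustar ystar <= residual A f v y) ->
  let eps := Rc / r * (eps_model + eps_noise) in
  `|ustar - usol ystar| <= eps /\
  ((`|u - ustar|)%:E <= eps_noise%:E + delta_width ipV W M eps)%E /\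
  (eps_noise%:E + delta_width ipV W M eps <= 2%:E * delta_width ipV W M eps)%E /\
  (M u -> eta = 0 -> ((`|u - ustar|)%:E <= delta_width ipV W M 0)%E).
Proof.
move=> ip_norm _ _ A_lin A_bd _ _ _ _ r_gt0 r_le_Rc A_norm A_inv usol_solves W_fin
  P_proj [e [orth_e e_neq0]] M u em en eta w ustar ystar dist_u _ eta_le w_def
  ustar_aff Y_ystar ustar_min eps.
have err := minimizer_error A_lin A_bd A_norm A_inv usol_solves r_gt0 r_le_Rc
  ip_norm W_fin P_proj w_def Y_ystar ustar_min.
have exact_fit := minimizer_exact A_lin A_bd A_norm A_inv usol_solves r_gt0 r_le_Rc
  ip_norm W_fin P_proj w_def Y_ystar ustar_min.
have orth_diff : orth_compl ipV W (u + eta - ustar).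
  by apply: (orth_compl_same_component ip_norm P_proj); rewrite -w_def.
have em_ge0 : 0 <= em by rewrite -lee_fin; apply: le_trans (dist_set_ge0 u) dist_u.
have en_ge0 : 0 <= en := le_trans (normr_ge0 eta) eta_le.
have noise_le_eps : em + en <= eps by apply: le_condition_mul; rewrite ?addr_ge0.
have M_ystar : M (usol ystar) by exists ystar.
have fat_u_eta : fattening M eps (u + eta).
  by apply: (fattening_shift dist_u); apply: le_trans noise_le_eps; rewrite lerD2l.
have fat_ustar : fattening M eps ustar := fattening_near M_ystar (err _ _ dist_u eta_le).
split; [exact: err | split; [|split]].
- have -> : u - ustar = u + eta + (- eta) - ustar by rewrite addrK.
  by apply: delta_width_ge_perturbed; rewrite ?normrN.
- apply: add_le_double; apply: le_trans (delta_width_ge_radius ip_norm _ M_ystar orth_e _).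
  + by rewrite lee_fin; apply: le_trans noise_le_eps; rewrite lerDr.
  + by apply: le_trans noise_le_eps; rewrite addr_ge0.
  + exact/eqP.
move=> M_u eta0; move: orth_diff; rewrite eta0 addr0 => orth_u.
apply: delta_width_ge orth_u; first exact: fattening_mem.
by rewrite (exact_fit M_u eta0); apply: fattening_mem.
Qed.
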